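(* Let $P:\mathcal C^{op}\to\mathbf{Pos}$ be a doctrine and $\mathsf K=(K,\kappa,\mu,\nu)$ a comonad on $P$ in $\mathbf{IdxPos}$. Let $\mathcal C_K$ be the category of coalgebras for the comonad $(K,\mu,\nu)$ on $\mathcal C$ and $U:\mathcal C_K\to\mathcal C$ the forgetful functor. Then the natural transformation $\square^{\mathsf K}:P\circ U^{op}\Rightarrow P\circ U^{op}$ defined, for each coalgebra $(X,c)$, by $\square^{\mathsf K}_{(X,c)}=P(c)\circ\kappa_X:PX\to PX$, is an interior operator on the doctrine $P\circ U^{op}:\mathcal C_K^{op}\to\mathbf{Pos}$.
   Context: A doctrine is a functor $P:\mathcal C^{op}\to\mathbf{Pos}$; for $t:X\to Y$, $P(t):PY\to PX$ is reindexing. A comonad on $P$ in the 2-category $\mathbf{IdxPos}$ of doctrines amounts to a quadruple $(K,\kappa,\mu,\nu)$ where $(K,\mu,\nu)$ is a comonad on $\mathcal C$, $\kappa:P\Rightarrow P\circ K^{op}$ is a natural transformation (components $\kappa_X:PX\to P(KX)$), and for all $X$, $\kappa_X\le P(\mu_X)\circ\kappa_{KX}\circ\kappa_X$ and $\kappa_X\le P(\nu_X)$ pointwise. A coalgebra is $(X,c)$ with $c:X\to KX$, $\nu_X c=\mathrm{id}_X$, $\mu_X c=Kc\circ c$; morphisms $t:(X,c)\to(X',c')$ satisfy $c't=Kt\circ c$. An interior operator on a doctrine $M:\mathcal B^{op}\to\mathbf{Pos}$ is a natural transformation $\square:M\Rightarrow M$ with $\square_B(\alpha)\le\alpha$ and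 $\square_B(\alpha)\le\square_B(\square_B\alpha)$ for all $B$ and $\alpha\in MB$. *)

From Stdlib Require Import ProofIrrelevance.
Set Implicit Arguments.
Unset Strict Implicit.



Record Category := {
  Obj :> Type;
  Hom : Obj -> Obj -> Type;
  idm : forall X, Hom X X;
  comp : forall X Y Z, Hom Y Z -> Hom X Y -> Hom X Z;  (* comp g f = g ∘ f *)
  comp_id_l : forall X Y (f : Hom X Y), comp (idm Y) f = f;
  comp_id_r : forall X Y (f : Hom X Y), comp f (idm X) = f;
  comp_assoc : forall X Y Z W (f : Hom X Y) (g : Hom Y Z) (h : Hom Z W),
      comp h (comp g f) = comp (comp h g) f
}.
Arguments idm {C} X : rename.
Arguments comp {C X Y Z} g f : rename.
Arguments Hom {C} X Y : rename.

Record Functor (C D : Category) := {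
  fobj :> C -> D;
  fmap : forall X Y, Hom X Y -> Hom (fobj X) (fobj Y);
  fmap_id : forall X, fmap (idm X) = idm (fobj X);
  fmap_comp : forall X Y Z (f : Hom X Y) (g : Hom Y Z),
      fmap (comp g f) = comp (fmap g) (fmap f)
}.
Arguments fmap {C D} F {X Y} f : rename.

Record Poset := {
  carrier :> Type;
  le : carrier -> carrier -> Prop;
  le_refl : forall x, le x x;
  le_trans : forall x y z, le x y -> le y z -> le x z;
  le_antisym : forall x y, le x y -> le y x -> x = y
}.
Arguments le {p} x y : rename.

Definition monotone (A B : Poset) (f : A -> B) : Prop :=
  forall x y, le x y -> le (f x) (f y).

(** * Doctrines: functors P : C^op -> Pos.
    [reindex t] is P(t) : P Y -> P X for t : X -> Y. *)
Record Doctrine (C : Category) := {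
  PObj :> C -> Poset;
  reindex : forall X Y, Hom X Y -> PObj Y -> PObj X;
  reindex_mono : forall X Y (t : Hom X Y), monotone (reindex t);
  reindex_id : forall X (a : PObj X), reindex (idm X) a = a;
  reindex_comp : forall X Y Z (f : Hom X Y) (g : Hom Y Z) (a : PObj Z),
      reindex (comp g f) a = reindex f (reindex g a)
}.
Arguments reindex {C} P {X Y} t a : rename.

Program Definition doctrine_precomp (D C : Category) (F : Functor D C)
  (P : Doctrine C) : Doctrine D :=
  {| PObj := fun X => P (F X);
     reindex := fun X Y t a => reindex P (fmap F t) a |}.
Next Obligation. intros D C F P X Y t a b H; now apply reindex_mono. Qed.
Next Obligation. intros D C F P X a; simpl; now rewrite fmap_id, reindex_id. Qed.
Next Obligation. intros D C F P X Y Z f g a; simpl; now rewrite fmap_comp, reindex_comp. Qed.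

Record Comonad (C : Category) := {
  cK :> Functor C C;
  cmu : forall X : C, Hom (cK X) (cK (cK X));
  cnu : forall X : C, Hom (cK X) X;
  cmu_nat : forall X Y (t : Hom X Y),
      comp (cmu Y) (fmap cK t) = comp (fmap cK (fmap cK t)) (cmu X);
  cnu_nat : forall X Y (t : Hom X Y),
      comp (cnu Y) (fmap cK t) = comp t (cnu X);
  counit_l : forall X, comp (cnu (cK X)) (cmu X) = idm (cK X);
  counit_r : forall X, comp (fmap cK (cnu X)) (cmu X) = idm (cK X);
  coassoc : forall X, comp (cmu (cK X)) (cmu X) = comp (fmap cK (cmu X)) (cmu X)
}.
Arguments cmu {C} K X : rename.
Arguments cnu {C} K X : rename.

Record DocComonad (C : Category) (P : Doctrine C) := {
  dK :> Comonad C;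
  kappa : forall X : C, P X -> P (dK X);
  kappa_mono : forall X : C, monotone (@kappa X);
  kappa_nat : forall X Y (t : Hom X Y) (a : P Y),
      @kappa X (reindex P t a) = reindex P (fmap dK t) (@kappa Y a);
  kappa_comult : forall (X : C) (a : P X),
      le (@kappa X a)
         (reindex P (cmu dK X) (@kappa (dK X) (@kappa X a)));
  kappa_counit : forall (X : C) (a : P X),
      le (@kappa X a) (reindex P (cnu dK X) a)
}.
Arguments kappa {C P} k X a : rename.

Record Coalgebra (C : Category) (K : Comonad C) := {
  coX :> C;
  coc : Hom coX (K coX);
  co_counit : comp (cnu K coX) coc = idm coX;
  co_coassoc : comp (cmu K coX) coc = comp (fmap K coc) coc
}.
Arguments coX {C K} c : rename.
Arguments coc {C K} c : rename.

Definition CoalgHom (C : Category) (K : Comonad C) (A B : Coalgebra K) :=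
  { t : Hom (coX A) (coX B) | comp (coc B) t = comp (fmap K t) (coc A) }.

Program Definition CoalgId (C : Category) (K : Comonad C) (A : Coalgebra K)
  : CoalgHom A A := exist _ (idm (coX A)) _.
Next Obligation. intros C K A; simpl. rewrite (fmap_id (cK K)). rewrite comp_id_l, comp_id_r. reflexivity. Qed.

Program Definition CoalgComp (C : Category) (K : Comonad C) (A B D : Coalgebra K)
  (g : CoalgHom B D) (f : CoalgHom A B) : CoalgHom A D :=
  exist _ (comp (proj1_sig g) (proj1_sig f)) _.
Next Obligation.
  destruct g as [g Hg], f as [f Hf]; simpl.
  rewrite comp_assoc, Hg, <- comp_assoc, Hf, comp_assoc, fmap_comp; reflexivity.
Qed.

Lemma coalg_hom_eq (C : Category) (K : Comonad C) (A B : Coalgebra K)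
  (f g : CoalgHom A B) : proj1_sig f = proj1_sig g -> f = g.
Proof.
  destruct f as [f Hf], g as [g Hg]; simpl; intros ->.
  f_equal; apply proof_irrelevance.
Qed.

Program Definition CoalgCat (C : Category) (K : Comonad C) : Category :=
  {| Obj := Coalgebra K; Hom := @CoalgHom C K;
     idm := @CoalgId C K; comp := @CoalgComp C K |}.
Next Obligation. intros C K; intros; apply coalg_hom_eq; simpl; apply comp_id_l. Qed.
Next Obligation. intros C K; intros; apply coalg_hom_eq; simpl; apply comp_id_r. Qed.
Next Obligation. intros C K; intros; apply coalg_hom_eq; simpl; apply comp_assoc. Qed.

Program Definition Forget (C : Category) (K : Comonad C)
  : Functor (CoalgCat K) C :=
  {| fobj := fun A => coX A; fmap := fun A B t => proj1_sig t |}.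
Next Obligation. reflexivity. Qed.
Next Obligation. reflexivity. Qed.

Definition is_interior_operator (B : Category) (M : Doctrine B)
  (box : forall X : B, M X -> M X) : Prop :=
  (forall X, monotone (box X)) /\
  (forall X Y (t : Hom X Y) (a : M Y),
      box X (reindex M t a) = reindex M t (box Y a)) /\
  (forall X (a : M X), le (box X a) a) /\
  (forall X (a : M X), le (box X a) (box X (box X a))).

Definition boxK (C : Category) (P : Doctrine C) (k : DocComonad P)
  : forall A : CoalgCat k, doctrine_precomp (Forget k) P A ->
                           doctrine_precomp (Forget k) P A :=
  fun A a => reindex P (coc A) (kappa k (coX A) a).


(* Each law of an interior operator is the image under P(c) of the matching
   law of kappa, transported along a coalgebra equation: c' t = K t c and the
   naturality of kappa give naturality, nu c = id turns kappa <= P(nu) into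
   box <= id, and mu c = K c c turns kappa <= P(mu) kappa kappa into
   box <= box box. *)

Section KappaBox.

Context {C : Category} {P : Doctrine C} {k : DocComonad P}.

Definition kappa_box {X : C} (c : Hom X (k X)) (a : P X) : P X :=
  reindex P c (kappa k X a).

Lemma kappa_box_mono {X : C} (c : Hom X (k X)) : monotone (kappa_box c).
Proof.
  intros a b Hab; apply reindex_mono, kappa_mono, Hab.
Qed.

Lemma kappa_box_natural {X Y : C} (c : Hom X (k X)) (c' : Hom Y (k Y))
  (t : Hom X Y) (a : P Y) :
  comp c' t = comp (fmap k t) c ->
  kappa_box c (reindex P t a) = reindex P t (kappa_box c' a).
Proof.
  intros Ht; unfold kappa_box.
  rewrite kappa_nat, <- !reindex_comp, Ht; reflexivity.
Qed.

Lemma kappa_box_deflationary {X : C} (c : Hom X (k X)) (a : P X) :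
  comp (cnu k X) c = idm X -> le (kappa_box c a) a.
Proof.
  intros Hc; unfold kappa_box.
  apply le_trans with (reindex P c (reindex P (cnu k X) a)).
  - apply reindex_mono, kappa_counit.
  - rewrite <- reindex_comp, Hc, reindex_id; apply le_refl.
Qed.

Lemma kappa_box_le_kappa_box2 {X : C} (c : Hom X (k X)) (a : P X) :
  comp (cmu k X) c = comp (fmap k c) c ->
  le (kappa_box c a) (kappa_box c (kappa_box c a)).
Proof.
  intros Hc; unfold kappa_box.
  apply le_trans
    with (reindex P c (reindex P (cmu k X) (kappa k (k X) (kappa k X a)))).
  - apply reindex_mono, kappa_comult.
  - rewrite <- reindex_comp, Hc, reindex_comp, <- kappa_nat; apply le_refl.
Qed.

End KappaBox.

Theorem proposition6p6 (C : Category) (P : Doctrine C) (k : DocComonad P) :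
  @is_interior_operator (CoalgCat k) (doctrine_precomp (Forget k) P) (@boxK C P k).
Proof.
  split; [|split; [|split]].
  - intros A; exact (kappa_box_mono (coc A)).
  - intros A B [t Ht] a; exact (kappa_box_natural (coc A) (coc B) t a Ht).
  - intros A a; exact (kappa_box_deflationary (coc A) a (co_counit A)).
  - intros A a; exact (kappa_box_le_kappa_box2 (coc A) a (co_coassoc A)).
Qed.
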